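(* Let $G$ be a digraph and $f$ a discrete Morse function on $G$. Then $\mathcal M(G,f)$ is an acyclic matching: there is no cycle $$\alpha_1<\beta_1>\alpha_2<\beta_2>\alpha_3<\cdots>\alpha_k<\beta_k>\alpha_1$$ with $k\ge2$, where all $\beta_i$ are distinct, $(\alpha_i,\beta_i)\in\mathcal M(G,f)$ for $1\le i\le k$, and the $\alpha_i$ are allowed elementary $n$-paths and the $\beta_i$ allowed elementary $(n+1)$-paths for some $n\ge0$.
   Context: A digraph $G=(V,E)$ consists of a set $V$ and $E\subseteq(V\times V)\setminus\{(v,v)\}$; $(u,v)\in E$ is written $u\to v$. An allowed elementary $n$-path is a sequence $v_0\cdots v_n$ of vertices with $v_{i-1}\to v_i\in E$ for $1\le i\le n$. For allowed elementary paths, $\gamma'<\gamma$ (or $\gamma>\gamma'$) means $\gamma'$ is obtained from $\gamma$ by deleting some entries. A map $f:V\to[0,+\infty)$ is a discrete Morse function on $G$ if for every allowed elementary path $v_0\cdots v_n$: (i) there is at most one index $i$ with $f(v_i)=0$ such that $v_0\cdots v_{i-1}v_{i+1}\cdots v_n$ is an allowed elementary $(n-1)$-path; (ii) there is at most one vertex $u$ with $f(u)=0$ such that for some $-1\le j\le n$ the sequence $v_0\cdots v_juv_{j+1}\cdots v_n$ (meaning $uv_0\cdots v_n$ if $j=-1$, $v_0\cdots v_nu$ if $j=n$) is an allowed elementary $(n+1)$-path. Set $f(v_0\cdots v_n)=\sum_if(v_i)$. $\mathcal M(G,f)$ is the set of pairs $(\alpha,\beta)$ with $\alpha$ an allowed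 elementary $n$-path, $\beta$ an allowed elementary $(n+1)$-path for some $n\ge0$, $\alpha<\beta$ and $f(\alpha)=f(\beta)$. *)

From mathcomp Require Import all_boot all_order all_algebra.
From mathcomp Require Import reals.
Set Implicit Arguments. Unset Strict Implicit. Unset Printing Implicit Defensive.
Import Order.TTheory GRing.Theory Num.Theory.
Local Open Scope ring_scope.

Definition digraph (V : eqType) (E : rel V) : Prop := forall v, ~~ E v v.

(* Allowed elementary path v0 ... vn (n >= 0): a nonempty sequence with
   consecutive vertices joined by edges.  It is an n-path iff size = n+1. *)
Definition allowed (V : eqType) (E : rel V) (p : seq V) : bool :=
  if p is x :: q then path E x q else false.

Definition path_lt (V : eqType) (g' g : seq V) : bool :=
  subseq g' g && (size g' < size g)%N.

Definition del_at (V : Type) (i : nat) (p : seq V) : seq V :=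
  take i p ++ drop i.+1 p.

(* insert u at index k (k = j+1 with -1 <= j <= n) *)
Definition ins_at (V : Type) (k : nat) (u : V) (p : seq V) : seq V :=
  take k p ++ u :: drop k p.

Definition is_dmf (R : realType) (V : eqType) (E : rel V) (f : V -> R) : Prop :=
  (forall v, 0 <= f v) /\
  (forall p, allowed E p ->
     (* (i) at most one index i with f(v_i)=0 whose deletion is allowed *)
     (forall i j vi vj, onth p i = Some vi -> onth p j = Some vj ->
        f vi = 0 -> allowed E (del_at i p) ->
        f vj = 0 -> allowed E (del_at j p) ->
        i = j) /\
     (* (ii) at most one vertex u with f(u)=0 that can be inserted *)
     (forall u1 u2, f u1 = 0 -> f u2 = 0 ->
        (exists k, (k <= size p)%N /\ allowed E (ins_at k u1 p)) ->
        (exists k, (k <= size p)%N /\ allowed E (ins_at k u2 p)) ->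
        u1 = u2)).

Definition fpath (R : realType) (V : Type) (f : V -> R) (p : seq V) : R :=
  \sum_(v <- p) f v.

Definition inM (R : realType) (V : eqType) (E : rel V) (f : V -> R)
  (a b : seq V) : Prop :=
  [/\ allowed E a, allowed E b, size b = (size a).+1, path_lt a b &
      fpath f a = fpath f b].

(* Along the cycle the weight can only drop: f(alpha_(i+1)) <= f(beta_i)
   because alpha_(i+1) is a face of beta_i and f >= 0, while
   f(beta_i) = f(alpha_i).  So the weight is constant on the cycle and
   (alpha_2, beta_1) lies in M as well.  But M is a matching: condition (i)
   makes the M-face of a path unique, and the M-coface of a path alpha is
   unique too, since by (ii) it inserts a fixed vertex u, and two different
   insertion places of u would glue to an allowed path with two deletable
   copies of u, against (i).  Hence alpha_2 = alpha_1 and then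
   beta_2 = beta_1, contradicting distinctness. *)

From Pilot Require Import Defs.
From mathcomp Require Import all_boot all_order all_algebra.
From mathcomp Require Import reals.
From mathcomp Require Import lra.
Set Implicit Arguments. Unset Strict Implicit. Unset Printing Implicit Defensive.
Import Order.TTheory GRing.Theory Num.Theory.
Local Open Scope ring_scope.

Lemma cycle_nonincreasing_const d (T : porderType d) (x : nat -> T) (k : nat) :
  (forall i, (i < k)%N -> (x (i.+1 %% k)%N <= x i)%O) ->
  forall i, (i < k)%N -> x i = x 0%N.
Proof.
move=> step.
have down j i : (i <= j < k)%N -> (x j <= x i)%O.
  elim: j => [|j IH] /andP[ij jk]; first by move: ij; rewrite leqn0 => /eqP ->.
  move: ij; rewrite leq_eqVlt => /orP[/eqP -> // | ij].
  apply: le_trans (IH _); last by rewrite -ltnS ij ltnW.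
  by have := step j (ltnW jk); rewrite modn_small.
move=> i ik; have k_gt0 : (0 < k)%N by apply: leq_ltn_trans ik.
apply/le_anti; rewrite down ?ik //=.
have := step k.-1 ltac:(by rewrite ltn_predL); rewrite prednK // modnn => /le_trans; apply.
by rewrite down // -ltnS prednK // ik leqnn.
Qed.

Section Sequences.
Variable V : eqType.

Lemma subseq_size_succ (a b : seq V) :
  subseq a b -> size b = (size a).+1 -> exists l u r, b = l ++ u :: r /\ a = l ++ r.
Proof.
elim: b a => [|x b IH] [|y a] //=.
- by case: b {IH} => // _ _; exists [::], x, [::].
- case: eqVneq => [-> | _] sub_ab [size_b].
    by have [l [u [r [-> ->]]]] := IH a sub_ab size_b; exists (x :: l), u, r.
  have := (size_subseq_leqif sub_ab).2; rewrite /= size_b eqxx => /esym/eqP <-.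
  by exists [::], x, (y :: a).
Qed.

Lemma cat_eq_cat_leq (l0 r0 l1 r1 : seq V) :
  l0 ++ r0 = l1 ++ r1 -> (size l0 <= size l1)%N ->
  exists B, l1 = l0 ++ B /\ r0 = B ++ r1.
Proof.
elim: l0 l1 => [|x l0 IH] l1 /=; first by move=> -> _; exists l1.
case: l1 => [|y l1] //= [-> /IH eq_l] /eq_l[B [-> ->]].
by exists B.
Qed.

End Sequences.

Lemma del_at_size_cat (V : Type) (l r : seq V) x : del_at (size l) (l ++ x :: r) = l ++ r.
Proof. by rewrite /del_at take_size_cat // -cat_rcons drop_size_cat ?size_rcons. Qed.

Lemma ins_at_size_cat (V : Type) (l r : seq V) x : ins_at (size l) x (l ++ r) = l ++ x :: r.
Proof. by rewrite /ins_at take_size_cat // drop_size_cat. Qed.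

Lemma onth_size_cat (V : Type) (l r : seq V) x : onth (l ++ x :: r) (size l) = Some x.
Proof. by rewrite onth_cat ltnn subnn. Qed.

Lemma allowed_cat_cons (V : eqType) (E : rel V) l x r :
  allowed E (l ++ x :: r) = allowed E (rcons l x) && allowed E (x :: r).
Proof. by case: l => [|y l] //=; rewrite -cat_rcons cat_path last_rcons. Qed.

Section Weight.
Variables (R : realType) (V : eqType) (f : V -> R).

Lemma fpath_cat_cons l u r : Defs.fpath f (l ++ u :: r) = Defs.fpath f (l ++ r) + f u.
Proof. by rewrite /Defs.fpath !big_cat big_cons /= addrCA addrC. Qed.

Lemma fpath_subseq_le a b : (forall v, 0 <= f v) -> subseq a b ->
  Defs.fpath f a <= Defs.fpath f b.
Proof.
move=> f_ge0; rewrite /Defs.fpath.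
elim: b a => [|x b IH] [|y a] //=; first by move=> _; rewrite big_nil; apply: sumr_ge0 => v _.
case: eqVneq => [-> /IH | _ /IH]; rewrite !big_cons; first by rewrite lerD2l.
by move/le_trans; apply; rewrite lerDr.
Qed.
End Weight.

Lemma allowed_insert_twice (V : eqType) (E : rel V) A B b C u :
  allowed E (A ++ u :: rcons B b ++ C) -> allowed E ((A ++ rcons B b) ++ u :: C) ->
  allowed E (A ++ u :: rcons B b ++ u :: C).
Proof.
move=> allowed_b0 allowed_b1.
rewrite allowed_cat_cons /= cat_path last_rcons in allowed_b0.
rewrite -cats1 -!catA /= catA allowed_cat_cons /= in allowed_b1.
case/and3P: allowed_b0 => allowed_Au path_uBb _; case/and3P: allowed_b1 => _ E_bu path_uC.
by rewrite allowed_cat_cons allowed_Au /= cat_path last_rcons path_uBb /= E_bu.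
Qed.

Section MorseMatching.
Variables (R : realType) (V : eqType) (E : rel V) (f : V -> R).
Hypothesis f_dmf : is_dmf E f.

Lemma inM_split a b : inM E f a b ->
  exists l u r, [/\ b = l ++ u :: r, a = l ++ r & f u = 0].
Proof.
case=> _ _ size_b /andP[sub_ab _] f_ab.
have [l [u [r [eq_b eq_a]]]] := subseq_size_succ sub_ab size_b.
exists l, u, r; split=> //.
by move: f_ab; rewrite eq_a eq_b fpath_cat_cons; lra.
Qed.

Lemma dmf_insertion_gap_nil A B C u : f u = 0 ->
  allowed E (A ++ u :: B ++ C) -> allowed E ((A ++ B) ++ u :: C) -> B = [::].
Proof.
case/lastP: B => [//|B b] fu0 allowed_b0 allowed_b1; exfalso.
have allowed_uu := allowed_insert_twice allowed_b0 allowed_b1.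
have [del_unique _] := f_dmf.2 _ allowed_uu.
have eq_uu : A ++ u :: rcons B b ++ u :: C = (A ++ u :: rcons B b) ++ u :: C.
  by rewrite -catA.
suff : size A = size (A ++ u :: rcons B b).
  by rewrite size_cat -[X in X = _]addn0 => /addnI.
apply: (del_unique _ _ u u) => //.
- exact: onth_size_cat.
- by rewrite eq_uu onth_size_cat.
- by rewrite del_at_size_cat catA.
- by rewrite eq_uu del_at_size_cat -catA.
Qed.

Lemma inM_face_unique a a' b : inM E f a b -> inM E f a' b -> a = a'.
Proof.
move=> M_ab M_a'b.
have [l [u [r [eq_b eq_a fu0]]]] := inM_split M_ab.
have [l' [w [r' [eq_b' eq_a' fw0]]]] := inM_split M_a'b.
have [allowed_a allowed_b _ _ _] := M_ab; have [allowed_a' _ _ _ _] := M_a'b.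
have {}eq_a : a = del_at (size l) b by rewrite eq_b del_at_size_cat.
have {}eq_a' : a' = del_at (size l') b by rewrite eq_b' del_at_size_cat.
rewrite eq_a eq_a' in allowed_a allowed_a' *.
have [del_unique _] := f_dmf.2 _ allowed_b.
congr del_at; apply: (del_unique _ _ u w) => //.
- by rewrite eq_b onth_size_cat.
- by rewrite eq_b' onth_size_cat.
Qed.

Lemma inM_coface_unique a b b' : inM E f a b -> inM E f a b' -> b = b'.
Proof.
move=> M_ab M_ab'.
have [allowed_a allowed_b _ _ _] := M_ab; have [_ allowed_b' _ _ _] := M_ab'.
have [l [u [r [eq_b eq_a fu0]]]] := inM_split M_ab.
have [l' [w [r' [eq_b' eq_a' fw0]]]] := inM_split M_ab'.
rewrite eq_b eq_b' in allowed_b allowed_b' *.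
have [_ ins_unique] := f_dmf.2 _ allowed_a.
have eq_uw : u = w.
  apply: ins_unique => //.
  - by exists (size l); rewrite eq_a size_cat leq_addr ins_at_size_cat.
  - by exists (size l'); rewrite eq_a' size_cat leq_addr ins_at_size_cat.
subst w; have eq_lr : l ++ r = l' ++ r' by rewrite -eq_a -eq_a'.
clear M_ab M_ab' ins_unique eq_a eq_a' eq_b eq_b'.
wlog le_ll' : l r l' r' eq_lr allowed_b allowed_b' / (size l <= size l')%N.
  move=> sym; case: (leqP (size l) (size l')) => [|/ltnW]; first exact: sym.
  by move=> le_l'l; apply/esym/sym.
have [B [eq_l' eq_r]] := cat_eq_cat_leq eq_lr le_ll'.
rewrite eq_l' eq_r in allowed_b allowed_b' *.
by rewrite (dmf_insertion_gap_nil fu0 allowed_b allowed_b') cats0.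
Qed.

End MorseMatching.

Theorem lemma5p2 (R : realType) (V : eqType) (E : rel V) (f : V -> R) :
  digraph E -> is_dmf E f ->
  ~ exists (k : nat) (alpha beta : nat -> seq V) (n : nat),
      [/\ (2 <= k)%N,
          (forall i, (i < k)%N ->
             size (alpha i) = n.+1 /\ size (beta i) = n.+2),
          (forall i j, (i < k)%N -> (j < k)%N -> beta i = beta j -> i = j),
          (forall i, (i < k)%N -> inM E f (alpha i) (beta i)) &
          (forall i, (i < k)%N -> path_lt (alpha (i.+1 %% k)%N) (beta i))].
Proof.
move=> _ f_dmf [k [alpha [beta [n [k_gt1 sizes beta_inj M_ab lt_cycle]]]]].
have k_gt0 : (0 < k)%N by apply: ltnW.
pose w i := Defs.fpath f (alpha i).
have w_step i : (i < k)%N -> w (i.+1 %% k)%N <= w i.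
  move=> ik; have [_ _ _ _ f_ab] := M_ab i ik.
  rewrite /w f_ab; apply: fpath_subseq_le f_dmf.1 _.
  by case/andP: (lt_cycle i ik).
have w10 : w 1%N = w 0%N := cycle_nonincreasing_const w_step k_gt1.
have M_a1b0 : inM E f (alpha 1%N) (beta 0%N).
  have [allowed_a1 _ _ _ _] := M_ab 1%N k_gt1.
  have [_ allowed_b0 _ _ f_ab0] := M_ab 0%N k_gt0.
  have [[size_a1 _] [_ size_b0]] := (sizes 1%N k_gt1, sizes 0%N k_gt0).
  split=> //.
  - by rewrite size_a1 size_b0.
  - by have := lt_cycle 0%N k_gt0; rewrite modn_small.
  - by rewrite -f_ab0; exact: w10.
have eq_a10 : alpha 1%N = alpha 0%N := inM_face_unique f_dmf M_a1b0 (M_ab 0%N k_gt0).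
have M_a0b1 := M_ab 1%N k_gt1; rewrite eq_a10 in M_a0b1.
have eq_b10 : beta 1%N = beta 0%N := inM_coface_unique f_dmf M_a0b1 (M_ab 0%N k_gt0).
by have := beta_inj 1%N 0%N k_gt1 k_gt0 eq_b10.
Qed.
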